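(* Let $n$ be a positive integer, $p\ge5$ a prime number, $I$ an infinite set, and $R=\prod_{i\in I}\mathbb Z/np^2\mathbb Z$. There exists a $2\times3$ matrix with entries in $R$ that is partition regular over $R$ but does not satisfy the generalised columns condition.
   Context: A $k\times l$ matrix $\mathbf A$ over $R$ is partition regular over $R$ if for every $r\ge1$ and every map $\chi\colon R\to\{1,\dots,r\}$ there is a nonzero $\mathbf x\in R^l$ with $\mathbf A\mathbf x=0$ and all entries of $\mathbf x$ of the same colour. With columns $\mathbf c_1,\dots,\mathbf c_l$, $\mathbf A$ satisfies the generalised columns condition if there exist $m\ge0$, a partition $\{1,\dots,l\}=I_0\cup\dots\cup I_m$ and $d_0,\dots,d_m\in R\setminus\{0\}$ with (i) $d_0\sum_{i\in I_0}\mathbf c_i=0$; (ii) for $1\le t\le m$, $d_t\sum_{i\in I_t}\mathbf c_i$ lies in the $R$-submodule generated by the $\mathbf c_j$ with $j\in I_0\cup\dots\cup I_{t-1}$; (iii) if $m>0$, the ideal $d_0(d_1\cdots d_m)^nR$ is infinite for every $n\ge0$. *)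

From HB Require Import structures.
From mathcomp Require Import all_boot all_order all_algebra.
From mathcomp Require Import boolp classical_sets functions cardinality.
Set Implicit Arguments. Unset Strict Implicit. Unset Printing Implicit Defensive.
Import Order.TTheory GRing.Theory.
Local Open Scope ring_scope.
Local Open Scope classical_set_scope.

Definition partition_regular (R : comPzRingType) (k l : nat) (A : 'M[R]_(k, l)) :=
  forall (r : nat), (1 <= r)%N -> forall chi : R -> 'I_r,
    exists x : 'cV[R]_l,
      [/\ x != 0, A *m x = 0 & forall i j : 'I_l, chi (x i 0) = chi (x j 0)].

(* The partition {1..l} = I_0 u ... u I_m is
   encoded by a surjective block assignment f : 'I_l -> 'I_(m+1)
   (I_t = f^-1(t)); the constants d_0..d_m are d : 'I_(m+1) -> R. *)
Definition gen_columns_condition (R : comPzRingType) (k l : nat) (A : 'M[R]_(k, l)) :=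
  exists (m : nat) (f : 'I_l -> 'I_m.+1) (d : 'I_m.+1 -> R),
    [/\ (forall t, exists i, f i = t),
        (forall t, d t != 0),
        d ord0 *: (\sum_(i | f i == ord0) col i A) = 0,
        (forall t : 'I_m.+1, (0 < t)%N ->
           exists a : 'I_l -> R,
             d t *: (\sum_(i | f i == t) col i A)
             = \sum_(j | (f j < t)%N) a j *: col j A)
      & ((0 < m)%N -> forall e : nat,
           infinite_set [set d ord0 * (\prod_(t : 'I_m.+1 | (0 < t)%N) d t) ^+ e * y
                        | y in [set: R]])].

From HB Require Import structures.
From mathcomp Require Import all_boot all_order all_algebra all_field.
From mathcomp Require Import boolp classical_sets functions cardinality.
From mathcomp Require Import zify ring.
Set Implicit Arguments. Unset Strict Implicit. Unset Printing Implicit Defensive.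
Import GRing.Theory.

(* The matrix is A = [[1, lam, -1], [0, p, 0]] with lam = p - mu, where
   mu^b = -1 (mod p) for some b > 0 (mu is 2 or p - 2, according to the parity
   of the order of 2 modulo p).

   Partition regularity: fix an injection e : nat -> I and let E_l be the
   indicator of the coordinate e l.  To a 2b-subset s_0 < ... < s_(2b-1) of nat
   attach the element  sum_j n p mu^j E_(s_j)  of R, and colour s by the colour
   of that element.  Since lam = -mu and lam mu^b = mu (mod p) and every weight
   n p mu^j is killed by p, three suitable 2b-subsets yield x_0, x_1, x_2 with
   x_0 + lam x_1 = x_2 and p x_1 = 0.  Ramsey's theorem for 2b-subsets makes
   the colouring constant on the subsets of an infinite set, which contains
   copies of the three subsets.

   Columns condition: if the middle column were in the first block, d_0 would
   annihilate p and one of lam - 1, lam, lam + 1, all prime to p.  So it lies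
   in a later block I_t, and the second row of (ii) for t reads p d_t = 0, as
   no other column has a nonzero second entry.  Hence d_t^2 = 0 in Z/np^2 and
   the ideal of (iii) vanishes for the exponent 2. *)

Section Ramsey.
Variable r : nat.

Definition homogeneous k (c : seq nat -> 'I_r) (h : nat -> nat) (col : 'I_r) :=
  forall s, sorted ltn s -> size s = k -> c (map h s) = col.

Lemma increasing_enum (P : nat -> Prop) :
  (forall m, exists i, m <= i /\ P i) ->
  exists2 h : nat -> nat, {homo h : i j / i < j} & forall i, P (h i).
Proof.
move=> /choice[g g_spec]; pose h i := iter i (fun x => g x.+1) (g 0).
exists h; first by apply: (homo_ltn ltn_trans) => i; have [] := g_spec (h i).+1.
by case=> [|i]; [case: (g_spec 0) | case: (g_spec (h i).+1)].
Qed.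

Lemma infinite_pigeonhole (K : nat -> 'I_r) :
  exists2 h : nat -> nat, {homo h : i j / i < j} & exists col, forall i, K (h i) = col.
Proof.
suff [col /increasing_enum[h h_incr hK]] : exists col, forall m, exists i, m <= i /\ K i = col.
  by exists h => //; exists col.
apply: contrapT => /forallNP bounded.
have /choice[B B_spec] : forall col, exists m, forall i, m <= i -> K i != col.
  move=> col; have /existsNP[m Hm] := bounded col; exists m => i le_mi.
  by apply/eqP => Ki; apply: Hm; exists i.
pose M := \max_col B col.
by have /eqP := B_spec (K M) M (leq_bigmax (K M)).
Qed.

Lemma sorted_map_preim (g : nat -> nat) (u : seq nat) :
  {homo g : i j / i < j} -> sorted ltn u -> (forall x, x \in u -> exists t, x = g t) ->
  exists2 t, sorted ltn t & u = map g t.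
Proof.
move=> g_incr u_sorted u_codom.
have /choice[T T_spec] : forall x, exists t, x \in u -> x = g t.
  move=> x; have [/u_codom[t ->]|_] := boolP (x \in u); first by exists t.
  by exists 0.
have u_def : u = map g (map T u).
  by rewrite -map_comp map_id_in // => x /T_spec /esym.
exists (map T u) => //.
by rewrite -(mono_sorted (leqW_mono (leq_mono g_incr))) -u_def.
Qed.

(* The diagonal argument: [fan H n.+1] is an infinite subsequence of [fan H n]
   beyond its first element [diag H n], chosen by [H] so that the colour of
   [diag H n] together with any k-subset of it depends on n only. *)
Definition fan (H : (nat -> nat) -> nat -> nat) n :=
  iter n (fun g => g \o succn \o H g) id.

Definition diag H n := fan H n 0.

Section Diagonal.
Variables (k : nat) (c : seq nat -> 'I_r).
Variables (H : (nat -> nat) -> nat -> nat) (col : (nat -> nat) -> 'I_r).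
Hypothesis H_incr : forall g, {homo H g : i j / i < j}.
Hypothesis H_hom :
  forall g, homogeneous k (fun s => c (g 0 :: map (g \o succn) s)) (H g) (col g).

Lemma fan_incr n : {homo fan H n : i j / i < j}.
Proof.
elim: n => [//|n IHn] i j /(H_incr (fan H n)) lt_ij.
by apply: IHn; rewrite ltnS.
Qed.

Lemma fan_factor n d : exists psi, fan H (n + d) =1 fan H n \o psi.
Proof.
elim: d => [|d [psi IHd]]; first by exists id => x; rewrite addn0.
by exists (psi \o succn \o H (fan H (n + d))) => x; rewrite addnS /= IHd.
Qed.

Lemma diag_in_fan n m : n < m -> exists t, diag H m = fan H n.+1 t.
Proof.
move=> lt_nm; have [psi Hpsi] := fan_factor n.+1 (m - n.+1).
by exists (psi 0); rewrite /diag -{1}(subnKC lt_nm) Hpsi.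
Qed.

Lemma diag_incr : {homo diag H : i j / i < j}.
Proof. by apply: (homo_ltn ltn_trans) => n; apply: fan_incr. Qed.

Lemma diag_hom n s : sorted ltn s -> size s = k -> all (ltn n) s ->
  c (diag H n :: map (diag H) s) = col (fan H n).
Proof.
move=> s_sorted s_size s_gt.
have [t t_sorted t_def] : exists2 t, sorted ltn t & map (diag H) s = map (fan H n.+1) t.
  apply: sorted_map_preim; [exact: fan_incr | exact: homo_sorted diag_incr _ _ |].
  by move=> _ /mapP[m /(allP s_gt) /diag_in_fan ? ->].
rewrite t_def map_comp; apply: H_hom => //.
by rewrite -s_size -(size_map (fan H n.+1)) -t_def size_map.
Qed.

End Diagonal.

Lemma ramsey k (c : seq nat -> 'I_r) :
  exists2 h : nat -> nat, {homo h : i j / i < j} & exists col, homogeneous k c h col.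
Proof.
elim: k c => [|k IHk] c; first by exists id => //; exists (c [::]) => -[].
have /choice[Hc Hc_spec] : forall g, exists hc : (nat -> nat) * 'I_r,
    {homo hc.1 : i j / i < j} /\
    homogeneous k (fun s => c (g 0 :: map (g \o succn) s)) hc.1 hc.2.
  move=> g; have [h h_incr [col h_hom]] := IHk (fun s => c (g 0 :: map (g \o succn) s)).
  by exists (h, col).
pose H g := (Hc g).1; pose col g := (Hc g).2.
have H_incr g : {homo H g : i j / i < j} by case: (Hc_spec g).
have H_hom g : homogeneous k (fun s => c (g 0 :: map (g \o succn) s)) (H g) (col g).
  by case: (Hc_spec g).
have [rho rho_incr [col0 rho_col]] := infinite_pigeonhole (fun n => col (fan H n)).
exists (diag H \o rho); first by move=> i j /rho_incr /(diag_incr H_incr).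
exists col0 => -[//|i s] /= s_sorted [s_size].
rewrite -(rho_col i) map_comp; apply: diag_hom => //; rewrite ?size_map //.
  exact: homo_sorted rho_incr _ (path_sorted s_sorted).
rewrite all_map; apply: sub_all (order_path_min ltn_trans s_sorted) => j /=.
exact: rho_incr.
Qed.

End Ramsey.

Local Open Scope ring_scope.
Local Open Scope classical_set_scope.

Lemma inj_nat_of_infinite (I : Type) :
  infinite_set [set: I] -> exists e : nat -> I, injective e.
Proof.
move=> /infiniteP /card_leP [f].
exists (fun k => val (f (SigSub (mem_set (Logic.I : [set: nat] k))))) => k l /val_inj.
by move=> /(inj (in_setT _) (in_setT _)) /(congr1 val).
Qed.

Lemma exists_expr_eqN1 (R : idomainType) (x : R) o : (0 < o)%N -> x ^+ o = 1 ->
  exists2 b, (0 < b)%N & x ^+ b = -1 \/ (- x) ^+ b = -1.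
Proof.
elim/ltn_ind: o => o IHo o_gt0 xo1.
have [o_odd|o_even] := boolP (odd o).
  by exists o => //; right; rewrite exprNn xo1 mulr1 -signr_odd o_odd.
have o_half : o = (o./2).*2 by rewrite -[LHS]odd_double_half (negbTE o_even) add0n.
have /eqP : (x ^+ o./2) ^+ 2 = 1 by rewrite -exprM muln2 -o_half.
rewrite sqrf_eq1 => /orP[/eqP half1|/eqP halfN1].
  by apply: IHo half1; lia.
by exists o./2 => //; [lia | left].
Qed.

Lemma exists_pow_eqN1_mod p : prime p -> (5 <= p)%N ->
  exists mu b, [/\ (1 < mu < p.-1)%N, (0 < b)%N & (p %| mu ^ b + 1)%N].
Proof.
move=> p_prime p_ge5.
have dvdFp m : (p %| m)%N = (m%:R == 0 :> 'F_p).
  by rewrite (dvdn_pcharf (pchar_Fp p_prime)).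
have two_nz : (2%:R : 'F_p) != 0 by rewrite -dvdFp gtnNdvd //; lia.
have fermat : (2%:R : 'F_p) ^+ p.-1 = 1.
  apply: (mulIf two_nz); rewrite mul1r -exprSr prednK ?prime_gt0 //.
  by have := expf_card (2%:R : 'F_p); rewrite card_Fp.
have [|b b_gt0 [two_b|ntwo_b]] := exists_expr_eqN1 _ fermat; first lia.
  exists 2%N, b; split=> //; first lia.
  by rewrite dvdFp natrD natrX two_b addNr.
exists (p - 2)%N, b; split=> //; first lia.
by rewrite dvdFp natrD natrX natrB ?pchar_Fp_0 ?sub0r ?ntwo_b ?addNr //; lia.
Qed.

Lemma coprime_annihilator (R : comPzRingType) (d : R) a p :
  coprime a p -> d * a%:R = 0 -> d * p%:R = 0 -> d = 0.
Proof.
move=> /(coprimezP a p)[[u v] /= uv1] da dp.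
have -> : d = d * (u * a%:Z + v * p%:Z)%:~R by rewrite uv1 mulr1.
by rewrite intrD !intrM mulrDr mulrCA da mulr0 add0r mulrCA dp mulr0.
Qed.

Lemma ord3P (i : 'I_3) : [\/ i = ord0, i = inord 1 | i = ord_max].
Proof.
by case: i => -[|[|[|//]]] i_lt; [apply: Or31 | apply: Or32 | apply: Or33];
  apply: val_inj; rewrite /= ?inordK.
Qed.

Lemma sum_ord3 (V : nmodType) (F : 'I_3 -> V) :
  \sum_(i < 3) F i = F ord0 + F (inord 1) + F ord_max.
Proof.
rewrite !big_ord_recl big_ord0 addr0 addrA.
by congr (_ + F _ + F _); apply: val_inj; rewrite /= ?inordK.
Qed.

Definition rado_mx (R : pzRingType) (lam p : nat) : 'M[R]_(2, 3) :=
  \matrix_(i < 2, j < 3) nth 0 (nth [::] [:: [:: 1; lam%:R; -1]; [:: 0; p%:R; 0]] i) j.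

Section RadoMatrix.
Variables (R : comPzRingType) (lam p : nat).
Local Notation A := (rado_mx R lam p).

Lemma rado_mx_sum0 (P : pred 'I_3) :
  (\sum_(j | P j) col j A) ord0 ord0
  = (P ord0)%:R + (P (inord 1))%:R * lam%:R - (P ord_max)%:R.
Proof.
rewrite summxE big_mkcond sum_ord3 !mxE inordK //=.
by case: (P _); case: (P _); case: (P _);
  rewrite ?mul0r ?mul1r ?addr0 ?add0r ?subr0 ?oppr0.
Qed.

Lemma rado_mx_comb1 (P : pred 'I_3) (a : 'I_3 -> R) :
  (\sum_(j | P j) a j *: col j A) ord_max ord0 = (P (inord 1))%:R * a (inord 1) * p%:R.
Proof.
rewrite summxE big_mkcond sum_ord3 !mxE inordK //=.
by case: (P _); case: (P _); case: (P _); rewrite /= ?mul0r ?mul1r ?mulr0 ?addr0 ?add0r.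
Qed.

Lemma rado_mx_sum1 (P : pred 'I_3) :
  (\sum_(j | P j) col j A) ord_max ord0 = (P (inord 1))%:R * p%:R.
Proof.
by under eq_bigr do rewrite -[col _ _]scale1r; rewrite rado_mx_comb1 mulr1.
Qed.

Lemma rado_mx_solution (x0 x1 x2 : R) :
  x0 + lam%:R * x1 = x2 -> p%:R * x1 = 0 -> A *m \col_i [:: x0; x1; x2]`_i = 0.
Proof.
move=> eq0 eq1; apply/matrixP => i j; rewrite !mxE sum_ord3 !mxE inordK //=.
case: i => -[|[|//]] _ /=.
  by rewrite mul1r mulN1r eq0 subrr.
by rewrite !mul0r add0r addr0.
Qed.

Lemma rado_mx_mid_not_first_block (P : pred 'I_3) (d : R) :
  prime p -> (1 < lam)%N -> (lam.+1 < p)%N -> d != 0 ->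
  d *: (\sum_(j | P j) col j A) = 0 -> ~~ P (inord 1).
Proof.
move=> p_prime lam_gt1 lam_lt /negP d_nz /matrixP sum_eq0; apply/negP => P1.
have := sum_eq0 ord0 ord0; have := sum_eq0 ord_max ord0.
rewrite !mxE rado_mx_sum0 rado_mx_sum1 P1 !mul1r => dp d_sum.
apply: d_nz; apply/eqP; apply: (@coprime_annihilator _ _ (P ord0 + lam - P ord_max) p) dp.
  by rewrite coprime_sym prime_coprime // gtnNdvd //; case: (P _); case: (P _); lia.
by rewrite natrB ?natrD //; case: (P _); lia.
Qed.

End RadoMatrix.

Lemma rado_mx_not_gcc (R : comPzRingType) lam p :
  prime p -> (1 < lam)%N -> (lam.+1 < p)%N ->
  (forall z : R, z * p%:R = 0 -> z ^+ 2 = 0) ->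
  ~ gen_columns_condition (rado_mx R lam p).
Proof.
move=> p_prime lam_gt1 lam_lt sqr_eq0 [m [f [d [_ d_nz cond0 cond_next cond_inf]]]].
have f1_nz := rado_mx_mid_not_first_block p_prime lam_gt1 lam_lt (d_nz ord0) cond0.
pose t := f (inord 1).
have t_gt0 : (0 < t)%N by rewrite lt0n; apply: contra f1_nz => /eqP t0; apply/eqP/val_inj.
have [a /matrixP /(_ ord_max ord0)] := cond_next t t_gt0.
rewrite mxE rado_mx_sum1 rado_mx_comb1 eqxx ltnn mul1r !mul0r => /sqr_eq0 dt_sqr.
have m_gt0 : (0 < m)%N by apply: leq_trans t_gt0 _; rewrite -ltnS.
apply: (cond_inf m_gt0 2); apply: sub_finite_set (finite_set1 0) => _ [y _ <-].
by rewrite (bigD1 t) //= exprMn dt_sqr mul0r mulr0 mul0r.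
Qed.

Lemma sum_nat_double (V : nmodType) (G : nat -> V) k :
  \sum_(0 <= j < k + k) G j = \sum_(0 <= j < k) G j + \sum_(0 <= j < k) G (j + k).
Proof. by rewrite (big_cat_nat _ (leq_addr k k)) // -{2}(add0n k) big_addn addnK. Qed.

Lemma sum_nat_double_head (V : nmodType) (G : nat -> V) k : (0 < k)%N ->
  \sum_(0 <= j < k + k) G j
  = G 0%N + \sum_(0 <= j < k) G j.+1 + \sum_(k.+1 <= j < k + k) G j.
Proof.
by move=> k_gt0; rewrite (big_cat_nat _ (n := k.+1)) ?big_nat_recl //; lia.
Qed.

(* With b fixed, low_pattern, succn and high_pattern enumerate the 2b-subsets
   {0..b} u {2b+1..3b-1},  {1..2b}  and  {0} u {b+1..3b-1}  of nat. *)
Definition low_pattern b j := if (j <= b)%N then j else (j + b)%N.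
Definition high_pattern b j := if j == 0%N then 0%N else (j + b)%N.

Lemma low_pattern_incr b : {homo low_pattern b : i j / (i < j)%N}.
Proof. by move=> i j; rewrite /low_pattern; case: (leqP i b); case: (leqP j b); lia. Qed.

Lemma high_pattern_incr b : {homo high_pattern b : i j / (i < j)%N}.
Proof. by move=> i j; rewrite /high_pattern; case: (i =P 0%N); case: (j =P 0%N); lia. Qed.

Section PatternSums.
Variables (R : comPzRingType) (n p lam mu b : nat).
Hypothesis char_R : (n * p ^ 2)%:R = 0 :> R.
Hypothesis p_dvd_lam_mu : (p %| lam + mu)%N.
Hypothesis p_dvd_mu_b : (p %| mu ^ b + 1)%N.
Hypothesis b_gt0 : (0 < b)%N.

Definition weight j : R := (n * p * mu ^ j)%:R.

Definition weighted_sum (F : nat -> R) (s : seq nat) :=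
  \sum_(0 <= j < size s) weight j * F (nth 0%N s j).

Definition pattern_sum F (f : nat -> nat) := weighted_sum F (mkseq f (b + b)).

Lemma natr_np_eq0 x : (p %| x)%N -> (n * p * x)%:R = 0 :> R.
Proof.
move=> p_dvd_x; have /dvdnP[q ->] : (n * p ^ 2 %| n * p * x)%N.
  by rewrite expnS expn1 mulnA dvdn_mul.
by rewrite natrM char_R mulr0.
Qed.

Lemma weight_lam j : lam%:R * weight j = - weight j.+1.
Proof.
apply/eqP; rewrite -addr_eq0 -natrM -natrD.
rewrite (_ : lam * (n * p * mu ^ j) + n * p * mu ^ j.+1 = n * p * (mu ^ j * (lam + mu)))%N.
  by rewrite natr_np_eq0 ?dvdn_mull.
by rewrite expnS; move: (mu ^ j)%N => x; ring.
Qed.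

Lemma weight_lam_shift j : lam%:R * weight (j + b) = weight j.+1.
Proof.
have : lam%:R * weight (j + b) + lam%:R * weight j = 0.
  rewrite -!natrM -natrD.
  rewrite (_ : lam * (n * p * mu ^ (j + b)) + lam * (n * p * mu ^ j)
             = n * p * (lam * mu ^ j * (mu ^ b + 1)))%N.
    by rewrite natr_np_eq0 ?dvdn_mull.
  by rewrite expnD; move: (mu ^ j)%N (mu ^ b)%N => x y; ring.
by move=> /eqP; rewrite (weight_lam j) addr_eq0 opprK => /eqP.
Qed.

Lemma weight_p j : p%:R * weight j = 0.
Proof. by rewrite -natrM mulnCA natr_np_eq0 ?dvdn_mulr. Qed.

Lemma weighted_sum_map F (h : nat -> nat) s :
  weighted_sum F (map h s) = weighted_sum (F \o h) s.
Proof.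
rewrite /weighted_sum size_map; apply: eq_big_nat => j /andP[_ j_lt].
by rewrite (nth_map 0%N).
Qed.

Lemma pattern_sumE F f : pattern_sum F f = \sum_(0 <= j < b + b) weight j * F (f j).
Proof.
rewrite /pattern_sum /weighted_sum size_mkseq; apply: eq_big_nat => j /andP[_ j_lt].
by rewrite nth_mkseq.
Qed.

Lemma pattern_sum_p F f : p%:R * pattern_sum F f = 0.
Proof. by rewrite mulr_sumr big1 // => j _; rewrite mulrA weight_p mul0r. Qed.

Lemma pattern_sum_rado F :
  pattern_sum F (low_pattern b) + lam%:R * pattern_sum F succn
  = pattern_sum F (high_pattern b).
Proof.
rewrite !pattern_sumE mulr_sumr [X in _ + X]sum_nat_double.
rewrite [X in X + _]sum_nat_double_head // [RHS]sum_nat_double_head //.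
have tail : \sum_(b.+1 <= j < b + b) weight j * F (low_pattern b j)
          = \sum_(b.+1 <= j < b + b) weight j * F (high_pattern b j).
  apply: eq_big_nat => j /andP[b_lt_j _].
  by rewrite /low_pattern /high_pattern leqNgt b_lt_j; case: j b_lt_j.
have low_mid : \sum_(0 <= j < b) weight j.+1 * F (low_pattern b j.+1)
             = \sum_(0 <= j < b) weight j.+1 * F j.+1.
  by apply: eq_big_nat => j /andP[_ j_lt_b]; rewrite /low_pattern j_lt_b.
have lam_low : \sum_(0 <= j < b) lam%:R * (weight j * F j.+1)
             = - \sum_(0 <= j < b) weight j.+1 * F j.+1.
  by rewrite -sumrN; apply: eq_bigr => j _; rewrite mulrA weight_lam mulNr.
have lam_high : \sum_(0 <= j < b) lam%:R * (weight (j + b) * F (j + b).+1)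
              = \sum_(0 <= j < b) weight j.+1 * F (high_pattern b j.+1).
  by apply: eq_bigr => j _; rewrite mulrA weight_lam_shift.
rewrite tail low_mid lam_low lam_high /low_pattern /high_pattern /=.
ring.
Qed.

End PatternSums.

Lemma Zp_nat_eq0 m k : (1 < m)%N -> ((k%:R : 'Z_m) == 0) = (m %| k)%N.
Proof. by move=> m_gt1; rewrite -val_eqE /= val_Zp_nat. Qed.

Lemma Zp_sqr_eq0 n p (z : 'Z_(n * p ^ 2)) :
  (0 < n)%N -> (1 < p)%N -> z * p%:R = 0 -> z ^+ 2 = 0.
Proof.
move=> n_gt0 p_gt1; have m_gt1 : (1 < n * p ^ 2)%N by nia.
rewrite -(natr_Zp z) -natrX -natrM => /eqP; rewrite !Zp_nat_eq0 // => zp.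
apply/eqP; rewrite Zp_nat_eq0 //.
have np_dvd_z : (n * p %| z)%N by rewrite -(@dvdn_pmul2r p) ?(ltnW p_gt1) // -mulnA mulnn.
rewrite (dvdn_trans _ (dvdn_mul np_dvd_z np_dvd_z)) //.
by rewrite expnS expn1 mulnA dvdn_mul // dvdn_mull.
Qed.

Lemma fct_natrE (T : Type) (M : pzRingType) k (t : T) : (k%:R : T -> M) t = k%:R.
Proof. by rewrite natmulfctE. Qed.

Lemma fct_Zp_sqr_eq0 n p (I : Type) (z : I -> 'Z_(n * p ^ 2)) :
  (0 < n)%N -> (1 < p)%N -> z * p%:R = 0 -> z ^+ 2 = 0.
Proof.
move=> n_gt0 p_gt1 zp; apply/funext => i; rewrite exprfctE; apply: Zp_sqr_eq0 => //.
by have := congr1 (fun g => g i) zp; rewrite mulrfctE fct_natrE.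
Qed.

Lemma rado_mx_partition_regular (n p lam mu b : nat) (I : Type) :
  (0 < n)%N -> (1 < p)%N -> (0 < b)%N -> (p %| lam + mu)%N -> (p %| mu ^ b + 1)%N ->
  infinite_set [set: I] -> partition_regular (rado_mx (I -> 'Z_(n * p ^ 2)) lam p).
Proof.
move=> n_gt0 p_gt1 b_gt0 p_dvd_lam_mu p_dvd_mu_b /inj_nat_of_infinite[e e_inj] r _ chi.
set R := I -> 'Z_(n * p ^ 2).
have m_gt1 : (1 < n * p ^ 2)%N by nia.
have char_R : (n * p ^ 2)%:R = 0 :> R by apply/funext => i; rewrite fct_natrE pchar_Zp.
pose E l : R := fun i => (`[< i = e l >])%:R.
have [h h_incr [col h_hom]] := ramsey (b + b) (fun s => chi (weighted_sum n p mu E s)).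
pose x f := pattern_sum n p mu b (E \o h) f.
have x_col f : {homo f : i j / (i < j)%N} -> chi (x f) = col.
  move=> f_incr; rewrite -(h_hom (mkseq f (b + b))) ?size_mkseq //.
    by rewrite weighted_sum_map.
  exact: homo_sorted f_incr _ (iota_ltn_sorted 0 _).
have x_low_at : x (low_pattern b) (e (h 0%N)) = (n * p)%:R.
  rewrite /x pattern_sumE fct_sumE big_ltn ?addn_gt0 ?b_gt0 // [X in _ + X]big1_seq ?addr0.
    by rewrite mulrfctE /weight fct_natrE /E /= asboolT // mulr1 expn0 muln1.
  move=> j; rewrite mem_index_iota => /andP[_ /andP[j_gt0 _]].
  rewrite mulrfctE /E /= asboolF ?mulr0 // => /e_inj /eqP; apply/negP; rewrite neq_ltn.
  by rewrite h_incr //; apply: (low_pattern_incr b j_gt0).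
pose X : 'cV[R]_3 := \col_i [:: x (low_pattern b); x succn; x (high_pattern b)]`_i.
have X_col (i : 'I_3) : chi (X i 0) = col.
  case: (ord3P i) => ->; rewrite mxE ?inordK //=; apply: x_col.
  - exact: low_pattern_incr.
  - by [].
  - exact: high_pattern_incr.
exists X; split; last by move=> i j; rewrite !X_col.
- apply/negP => /eqP /matrixP /(_ ord0 ord0); rewrite !mxE /=.
  move=> /(congr1 (fun g : R => g (e (h 0%N)))); rewrite x_low_at => /eqP.
  by rewrite Zp_nat_eq0 // gtnNdvd //; nia.
- by apply: rado_mx_solution; [apply: pattern_sum_rado | apply: pattern_sum_p].
Qed.

Theorem corollary4p8 (n p : nat) (I : Type) :
  (0 < n)%N -> prime p -> (5 <= p)%N -> infinite_set [set: I] ->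
  exists A : 'M[I -> 'Z_(n * p ^ 2)]_(2, 3),
    partition_regular A /\ ~ gen_columns_condition A.
Proof.
move=> n_gt0 p_prime p_ge5 I_inf.
have [mu [b [/andP[mu_gt1 mu_lt] b_gt0 p_dvd_mu_b]]] := exists_pow_eqN1_mod p_prime p_ge5.
have p_gt1 := prime_gt1 p_prime.
exists (rado_mx _ (p - mu) p); split.
- apply: rado_mx_partition_regular n_gt0 p_gt1 b_gt0 _ p_dvd_mu_b I_inf.
  by rewrite subnK ?dvdnn //; lia.
- apply: rado_mx_not_gcc => //; [lia | lia | move=> z].
  exact: fct_Zp_sqr_eq0.
Qed.
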